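(* Let $d \ge 1$, $p \in [0,1/2)$, $\mathbf{x} \in \mathbb{R}^d$, $G > 0$, $\lambda > 0$. Let measurements $y_k = \langle \mathbf{x}, \mathbf{a}_k\rangle + \epsilon_k$ ($k = 0,1,\dots$) be given, where $\epsilon_k = \xi_k\nu_k$ with $\xi_k$ an indicator equal to $1$ with probability $p$, independent of all other variables, and $\nu_k$ arbitrary (possibly dependent on $\mathbf{x}$ and the measurement vectors). Let $\mathcal{F}_k$ be the $\sigma$-algebra generated by $\{\mathbf{a}_0,\epsilon_0\},\dots,\{\mathbf{a}_{k-1},\epsilon_{k-1}\}$, and assume each $\mathbf{a}_k \in \mathbb{R}^d$ has unit norm and is independent of $\mathcal{F}_k$, the vectors $\sqrt d\,\mathbf{a}_k$ are i.i.d. mean-zero isotropic, and for every $\mathcal{F}_k$-measurable $\mathbf{u}$, $\mathbb{E}_{\mathbf{a}_k}[|\langle \mathbf{u},\mathbf{a}_k\rangle| \mid \mathbf{u}] \ge \widetilde{C}\|\mathbf{u}\|_2/\sqrt d$ for a constant $\widetilde C > 0$. Let $\mathbf{x}_0 = 0$, $\mathbf{x}_{k+1} = \mathbf{x}_k + G\lambda^{-k}\mathrm{sign}(y_k - \langle \mathbf{x}_k,\mathbf{a}_k\rangle)\mathbf{a}_k$, $\mathbf{u}_k := \lambda^k(\mathbf{x} - \mathbf{x}_k)/G$ and $Y_k := \|\mathbf{u}_k\|_2^2$, so that $$Y_{k+1} = \lambda^2\Big\{\|\mathbf{u}_k\|^2 - 2\langle \mathbf{u}_k,\mathbf{a}_k\rangle\,\mathrm{sign}\big(\langle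 \mathbf{u}_k,\mathbf{a}_k\rangle + \lambda^k\epsilon_k/G\big) + 1\Big\}.$$ Suppose $$1 < \lambda^2 \le 1 + \widetilde{C}^2\frac{(1-2p)^2}{9d} < \frac{50}{49},$$ and set $a = \frac{1}{2(\lambda^2-1)}$, $\eta = c^*\sqrt{\lambda^2-1}$ with $$c^* = \frac{1}{8\lambda^2}\Big[\frac{\sqrt2\,\lambda^2(1-2p)\widetilde C}{\sqrt d} - \sqrt{\lambda^2-1}\Big(\frac32 + \lambda^2\Big)\Big].$$ Then $$\mathbb{E}\big[e^{\eta(Y_{k+1} - a)}\mathbb{1}_{\{Y_k \le a\}} \mid \mathcal{F}_k\big] \le \exp\Big\{\frac{\widetilde C(1-2p)}{3\sqrt d}\Big\}.$$
   Context: $\mathrm{sign}$ is the sign function. *)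

From HB Require Import structures.
From mathcomp Require Import all_boot all_order all_algebra.
From mathcomp Require Import all_classical all_reals all_analysis.
Set Implicit Arguments. Unset Strict Implicit. Unset Printing Implicit Defensive.
Import Order.TTheory GRing.Theory Num.Theory.
Local Open Scope classical_set_scope.
Local Open Scope ring_scope.

Definition dotv (R : realType) (d : nat) (u v : 'rV[R]_d) : R :=
  \sum_(i < d) u ord0 i * v ord0 i.
Definition norm2 (R : realType) (d : nat) (u : 'rV[R]_d) : R :=
  Num.sqrt (dotv u u).

Definition vcoord (R : realType) (T : Type) (d : nat)
  (X : T -> 'rV[R]_d) (i : 'I_d) : T -> R := fun w => X w ord0 i.

Definition sigma_vec (R : realType) (T : Type) (d : nat)
  (X : T -> 'rV[R]_d) : set (set T) :=
  <<s [set A | exists i (B : set R), measurable B /\ A = vcoord X i @^-1` B] >>.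

Definition borel_vec (R : realType) (d : nat) : set (set 'rV[R]_d) :=
  <<s [set S | exists i (B : set R), measurable B /\
               S = (fun v : 'rV[R]_d => v ord0 i) @^-1` B] >>.

Definition indep_sigma (R : realType) (dT : measure_display)
  (T : measurableType dT) (P : probability T R) (F1 F2 : set (set T)) :=
  forall A B, F1 A -> F2 B -> P (A `&` B) = (P A * P B)%E.

Definition noise (R : realType) (T : Type) (xi : nat -> T -> bool)
  (nu : nat -> T -> R) (k : nat) : T -> R :=
  fun w => (xi k w)%:R * nu k w.

Definition filt (R : realType) (T : Type) (d : nat) (a : nat -> T -> 'rV[R]_d)
  (eps : nat -> T -> R) (k : nat) : set (set T) :=
  <<s [set A | exists j, (j < k)%N /\ exists B : set R, measurable B /\
           ((exists i, A = vcoord (a j) i @^-1` B) \/ A = eps j @^-1` B)] >>.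

(* sigma-algebra generated by all variables other than xi_k:
   all a_j, all nu_j, and xi_j for j <> k *)
Definition others_xi (R : realType) (T : Type) (d : nat)
  (a : nat -> T -> 'rV[R]_d) (xi : nat -> T -> bool) (nu : nat -> T -> R)
  (k : nat) : set (set T) :=
  <<s [set A | exists j,
        (exists i (B : set R), measurable B /\ A = vcoord (a j) i @^-1` B)
     \/ (exists B : set R, measurable B /\ A = nu j @^-1` B)
     \/ (j <> k /\ A = [set w | xi j w])] >>.

Fixpoint iterx (R : realType) (T : Type) (d : nat) (x : 'rV[R]_d)
  (G lam : R) (a : nat -> T -> 'rV[R]_d) (eps : nat -> T -> R)
  (k : nat) (w : T) : 'rV[R]_d :=
  match k with
  | 0 => 0
  | k'.+1 =>
      let xk := iterx x G lam a eps k' w in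
      let yk := dotv x (a k' w) + eps k' w in
      xk + (G * lam ^- k' * Num.sg (yk - dotv xk (a k' w))) *: a k' w
  end.

Definition uvec (R : realType) (T : Type) (d : nat) (x : 'rV[R]_d)
  (G lam : R) (a : nat -> T -> 'rV[R]_d) (eps : nat -> T -> R)
  (k : nat) (w : T) : 'rV[R]_d :=
  (lam ^+ k / G) *: (x - iterx x G lam a eps k w).
Definition Yseq (R : realType) (T : Type) (d : nat) (x : 'rV[R]_d)
  (G lam : R) (a : nat -> T -> 'rV[R]_d) (eps : nat -> T -> R)
  (k : nat) (w : T) : R :=
  norm2 (uvec x G lam a eps k w) ^+ 2.

(* "E[X | F] <= c almost surely", for a nonnegative random variable X,
   stated through the defining property of conditional expectation:
   E[X 1_A] <= c P(A) for every A in F. *)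
Definition cond_exp_le (R : realType) (dT : measure_display)
  (T : measurableType dT) (P : probability T R) (F : set (set T))
  (X : T -> R) (c : R) :=
  forall A, F A -> (\int[P]_(w in A) (X w)%:E <= c%:E * P A)%E.

(* On the event {Y_k <= a} the increment of Y is bounded deterministically.
   Write q = sqrt (lam^2 - 1) and B = Ct (1 - 2p) / (3 sqrt d), so that
   q <= B < 1/7.  The recursion Y_{k+1} = lam^2 (Y_k - 2 s <u_k, a_k> + s^2)
   together with -2 sqrt 2 q s <u, a> <= 2 q^2 |u|^2 + s^2 and 2 q^2 Y_k <= 1
   gives q (Y_{k+1} - a) <= q (1/2 + lam^2) + sqrt 2 lam^2, whence
   eta (Y_{k+1} - a) <= B pointwise.  The conditional expectation is therefore
   at most e^B, without using any of the distributional hypotheses. *)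

From HB Require Import structures.
From mathcomp Require Import all_boot all_order all_algebra.
From mathcomp Require Import all_classical all_reals all_analysis.
From mathcomp Require Import ring lra measurable_realfun.
Import Order.TTheory GRing.Theory Num.Theory.
Set Implicit Arguments. Unset Strict Implicit. Unset Printing Implicit Defensive.
Local Open Scope classical_set_scope.
Local Open Scope ring_scope.

Section DotProduct.
Variables (R : realType) (d : nat).
Implicit Types (u v : 'rV[R]_d) (c e : R).

Lemma dotvv_ge0 u : 0 <= dotv u u.
Proof. by apply: sumr_ge0 => i _; rewrite -expr2 sqr_ge0. Qed.

Lemma norm2_sqr u : norm2 u ^+ 2 = dotv u u.
Proof. by rewrite sqr_sqrtr // dotvv_ge0. Qed.

Lemma dotvZl c u v : dotv (c *: u) v = c * dotv u v.
Proof. by rewrite /dotv mulr_sumr; apply: eq_bigr => i _; rewrite !mxE mulrA. Qed.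

Lemma dotvBl u v w : dotv (u - v) w = dotv u w - dotv v w.
Proof. by rewrite /dotv -sumrB; apply: eq_bigr => i _; rewrite !mxE mulrBl. Qed.

Lemma dotv_lincomb c e u v :
  dotv (c *: u + e *: v) (c *: u + e *: v) =
  c ^+ 2 * dotv u u + 2 * c * e * dotv u v + e ^+ 2 * dotv v v.
Proof.
rewrite /dotv !mulr_sumr -!big_split /=.
by apply: eq_bigr => i _; rewrite !mxE; ring.
Qed.

End DotProduct.

Section Iteration.
Variables (R : realType) (T : Type) (d : nat) (x : 'rV[R]_d) (G lam : R).
Variables (a : nat -> T -> 'rV[R]_d) (eps : nat -> T -> R).
Hypotheses (G_gt0 : 0 < G) (lam_gt0 : 0 < lam).

Lemma uvec_succ k w :
  uvec x G lam a eps k.+1 w = lam *: uvec x G lam a eps k w -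
    (lam * Num.sg (dotv x (a k w) + eps k w
                   - dotv (iterx x G lam a eps k w) (a k w))) *: a k w.
Proof.
have lamk0 : lam ^+ k != 0 by rewrite expf_neq0 // gt_eqF.
apply/rowP => i; rewrite !mxE exprS; field.
by rewrite lamk0 gt_eqF.
Qed.

Lemma Yseq_succ k w : dotv (a k w) (a k w) = 1 ->
  let u := uvec x G lam a eps k w in
  let s := Num.sg (dotv u (a k w) + lam ^+ k * eps k w / G) in
  Yseq x G lam a eps k.+1 w = lam ^+ 2 * (dotv u u - 2 * dotv u (a k w) * s + s ^+ 2).
Proof.
move=> a_unit u s.
have lamk_gt0 : 0 < lam ^+ k by rewrite exprn_gt0.
have sgE : Num.sg (dotv x (a k w) + eps k w - dotv (iterx x G lam a eps k w) (a k w)) = s.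
  rewrite /s /u /uvec dotvZl addrAC -dotvBl.
  have -> : dotv (x - iterx x G lam a eps k w) (a k w) + eps k w =
     G / lam ^+ k * (lam ^+ k / G * dotv (x - iterx x G lam a eps k w) (a k w)
                     + lam ^+ k * eps k w / G).
    by field; rewrite !gt_eqF.
  by rewrite sgrM gtr0_sg ?mul1r // divr_gt0.
rewrite /Yseq norm2_sqr uvec_succ sgE -scaleNr dotv_lincomb a_unit -/u.
ring.
Qed.

End Iteration.

Lemma scaled_increment_le (R : realType) (d : nat) (u v : 'rV[R]_d) (q s : R) :
  0 < q -> dotv v v = 1 -> s ^+ 2 <= 1 -> 2 * q ^+ 2 * dotv u u <= 1 ->
  q * ((q ^+ 2 + 1) * (dotv u u - 2 * dotv u v * s + s ^+ 2) - 1 / (2 * q ^+ 2))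
    <= q * (1 / 2 + (q ^+ 2 + 1)) + Num.sqrt 2 * (q ^+ 2 + 1).
Proof.
move=> q_gt0 vv1 s2_le1 uu_le.
set r := Num.sqrt 2; set Y := dotv u u in uu_le *; set W := dotv u v.
have r_gt0 : 0 < r by rewrite sqrtr_gt0.
have r2 : r ^+ 2 = 2 by rewrite sqr_sqrtr.
have young : 0 <= 2 * q ^+ 2 * Y + 2 * r * q * s * W + s ^+ 2.
  have := dotvv_ge0 ((r * q) *: u + s *: v).
  by rewrite dotv_lincomb vv1 exprMn r2 -/Y -/W; lra.
have cross : q * (- 2 * W * s) <= r.
  by rewrite -(ler_pM2l r_gt0) -expr2 r2; lra.
have qY : q * (q ^+ 2 * Y) <= q / 2 by rewrite ler_pM2l //; lra.
have YA : q * (Y - 1 / (2 * q ^+ 2)) <= 0.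
  rewrite pmulr_rle0 // subr_le0 ler_pdivlMr; first by rewrite mulrC.
  by rewrite mulr_gt0 // exprn_gt0.
have L_gt0 : 0 < q ^+ 2 + 1 by rewrite ltr_wpDl // sqr_ge0.
have Lcross := ler_wpM2l (ltW L_gt0) cross.
have Ls : q * (q ^+ 2 + 1) * s ^+ 2 <= q * (q ^+ 2 + 1).
  by rewrite ler_piMr // mulr_ge0 // ltW.
have -> : q * ((q ^+ 2 + 1) * (Y - 2 * W * s + s ^+ 2) - 1 / (2 * q ^+ 2)) =
  q * (q ^+ 2 * Y) + q * (Y - 1 / (2 * q ^+ 2)) + (q ^+ 2 + 1) * (q * (- 2 * W * s))
  + q * (q ^+ 2 + 1) * s ^+ 2 by ring.
lra.
Qed.

Lemma cstar_increment_le (R : rcfType) (L q B Z : R) :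
  1 < L -> L < 50 / 49 -> 0 < q -> q <= B -> B < 1 / 7 ->
  q * Z <= q * (1 / 2 + L) + Num.sqrt 2 * L ->
  1 / (8 * L) * (Num.sqrt 2 * L * (3 * B) - q * (3 / 2 + L)) * q * Z <= B.
Proof.
move=> L_gt1 L_lt q_gt0 qB B_lt qZ.
set r := Num.sqrt 2 in qZ *; set c := 1 / (8 * L) * _.
have r2 : r ^+ 2 = 2 by rewrite sqr_sqrtr.
have r_gt0 : 0 < r by rewrite sqrtr_gt0.
have [r_ge1 r_le] : 1 <= r /\ r <= 3 / 2 by split; nra.
have cE : c * (8 * L) = r * L * (3 * B) - q * (3 / 2 + L) by rewrite /c; field; lra.
have c_ge0 : 0 <= c.
  rewrite -(pmulr_lge0 _ (_ : 0 < 8 * L)) ?cE; last lra.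
  have : q * (3 / 2 + L) <= B * (3 / 2 + L) by rewrite ler_pM2r //; lra.
  have : 0 <= (r * L - 1) * B by apply: mulr_ge0; nra.
  nra.
have c_le : c <= 3 * r * B / 8.
  rewrite -(ler_pM2r (_ : 0 < 8 * L)) ?cE; last lra.
  have -> : 3 * r * B / 8 * (8 * L) = 3 * r * B * L by field.
  nra.
have rq : r * q * (1 / 2 + L) <= 3 / 2 * (1 / 7) * (1 / 2 + 50 / 49).
  by apply: ler_pM; nra.
rewrite -mulrA; apply: le_trans (ler_wpM2l c_ge0 qZ) _.
apply: le_trans (ler_wpM2r _ c_le) _; first nra.
have -> : 3 * r * B / 8 * (q * (1 / 2 + L) + r * L) =
  3 * B * (r * q * (1 / 2 + L)) / 8 + 3 * r ^+ 2 * B * L / 8 by ring.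
rewrite r2; nra.
Qed.

Lemma Yseq_increment_le (R : realType) (T : Type) (d : nat) (x : 'rV[R]_d)
  (G lam B : R) (a : nat -> T -> 'rV[R]_d) (eps : nat -> T -> R) k w :
  0 < G -> 0 < lam -> 0 < B -> 1 < lam ^+ 2 -> lam ^+ 2 <= 1 + B ^+ 2 ->
  1 + B ^+ 2 < 50 / 49 -> dotv (a k w) (a k w) = 1 ->
  let aa := 1 / (2 * (lam ^+ 2 - 1)) in
  Yseq x G lam a eps k w <= aa ->
  1 / (8 * lam ^+ 2) * (Num.sqrt 2 * lam ^+ 2 * (3 * B)
                        - Num.sqrt (lam ^+ 2 - 1) * (3 / 2 + lam ^+ 2))
    * Num.sqrt (lam ^+ 2 - 1) * (Yseq x G lam a eps k.+1 w - aa) <= B.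
Proof.
move=> G_gt0 lam_gt0 B_gt0 lam2_gt1 lam2_le lam2_lt a_unit aa.
set q := Num.sqrt (lam ^+ 2 - 1).
have q_gt0 : 0 < q by rewrite sqrtr_gt0 subr_gt0.
have q2 : q ^+ 2 = lam ^+ 2 - 1 by rewrite sqr_sqrtr // subr_ge0 ltW.
have qB : q <= B by nra.
have aaE : aa = 1 / (2 * q ^+ 2) by rewrite q2.
rewrite Yseq_succ // /Yseq norm2_sqr aaE => Yk_le.
apply: cstar_increment_le; [lra | lra | exact: q_gt0 | exact: qB | nra |].
have -> : lam ^+ 2 = q ^+ 2 + 1 by rewrite q2; ring.
apply: scaled_increment_le => //.
- by rewrite sqr_sg; case: (_ != 0); rewrite ?ler01.
- by rewrite mulrC -ler_pdivlMr // mulr_gt0 // exprn_gt0.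
Qed.

Lemma ge0_le_integral_nomeas (R : realType) (dT : measure_display)
  (T : measurableType dT) (mu : {measure set T -> \bar R}) (D : set T)
  (f g : T -> \bar R) :
  (forall x, D x -> 0 <= f x)%E -> (forall x, D x -> f x <= g x)%E ->
  (\int[mu]_(x in D) f x <= \int[mu]_(x in D) g x)%E.
Proof.
move=> f0 fg; have g0 x : D x -> (0 <= g x)%E.
  by move=> Dx; exact: le_trans (f0 x Dx) (fg x Dx).
rewrite (ge0_integralE _ f0) (ge0_integralE _ g0).
apply: ereal_sup_le => _ [h hf <-]; exists h => //= x.
apply: le_trans (hf x) _; rewrite /patch; case: ifP => // /[1!inE] Dx.
exact: fg.
Qed.

Lemma integral_le_cst_measure (R : realType) (dT : measure_display)
  (T : measurableType dT) (mu : {measure set T -> \bar R}) (D : set T)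
  (f : T -> R) (c : R) :
  measurable D -> (forall x, D x -> 0 <= f x <= c) ->
  (\int[mu]_(x in D) (f x)%:E <= c%:E * mu D)%E.
Proof.
move=> mD f0c; rewrite -integral_cst //.
by apply: ge0_le_integral_nomeas => x /f0c /andP[f0 fc]; rewrite lee_fin.
Qed.

Lemma filt_sub_measurable (R : realType) (dT : measure_display)
  (T : measurableType dT) (d : nat) (a : nat -> T -> 'rV[R]_d)
  (eps : nat -> T -> R) k :
  (forall j i, measurable_fun setT (vcoord (a j) i)) ->
  (forall j, measurable_fun setT (eps j)) ->
  filt a eps k `<=` measurable.
Proof.
move=> ma meps; apply: smallest_sub; first exact: sigma_algebra_measurable.
move=> _ [j [_ [B [mB [[i ->]| ->]]]]]; rewrite -[X in measurable X]setTI.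
- exact: ma.
- exact: meps.
Qed.

Lemma measurable_noise (R : realType) (dT : measure_display)
  (T : measurableType dT) (xi : nat -> T -> bool) (nu : nat -> T -> R) k :
  measurable_fun setT (nu k) -> measurable [set w | xi k w] ->
  measurable_fun setT (noise xi nu k).
Proof.
move=> mnu mxi; apply: measurable_funM => //.
have -> : (fun w => (xi k w)%:R) = (\1_[set w | xi k w] : T -> R).
  apply/funext => w; rewrite indicE.
  case: (boolP (xi k w)) => h; first by rewrite mem_set.
  by rewrite memNset //= (negPf h).
exact: measurable_indic.
Qed.

Theorem lemma4p2 (R : realType) (dT : measure_display) (T : measurableType dT)
  (P : probability T R) (d : nat) (p : R) (x : 'rV[R]_d) (G lam Ct : R)
  (a : nat -> T -> 'rV[R]_d) (xi : nat -> T -> bool) (nu : nat -> T -> R) :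
  (1 <= d)%N ->
  0 <= p -> p < 1 / 2 ->
  0 < G -> 0 < lam -> 0 < Ct ->
  (* measurability of the variables *)
  (forall k i, measurable_fun setT (vcoord (a k) i)) ->
  (forall k, measurable_fun setT (nu k)) ->
  (forall k, measurable [set w | xi k w]) ->
  (* xi_k is an indicator equal to 1 with probability p,
     independent of all other variables *)
  (forall k, P [set w | xi k w] = p%:E) ->
  (forall k, indep_sigma P (<<s [set [set w | xi k w]] >>)
                           (others_xi a xi nu k)) ->
  (* a_k has unit norm and is independent of F_k *)
  (forall k w, norm2 (a k w) = 1) ->
  (forall k, indep_sigma P (sigma_vec (a k)) (filt a (noise xi nu) k)) ->
  (* sqrt d a_k are identically distributed, mean-zero, isotropic *)
  (forall k S, borel_vec S -> P (a k @^-1` S) = P (a 0%N @^-1` S)) ->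
  (forall k i, (\int[P]_w (Num.sqrt d%:R * a k w ord0 i)%:E = 0)%E) ->
  (forall k i j, (\int[P]_w ((Num.sqrt d%:R * a k w ord0 i) *
                             (Num.sqrt d%:R * a k w ord0 j))%:E
                  = ((i == j)%:R)%:E)%E) ->
  (* E_{a_k} |<u, a_k>| >= Ct ||u|| / sqrt d *)
  (forall k (v : 'rV[R]_d),
     ((Ct * norm2 v / Num.sqrt d%:R)%:E
        <= \int[P]_w (`|dotv v (a k w)|)%:E)%E) ->
  1 < lam ^+ 2 ->
  lam ^+ 2 <= 1 + Ct ^+ 2 * (1 - 2 * p) ^+ 2 / (9 * d%:R) ->
  1 + Ct ^+ 2 * (1 - 2 * p) ^+ 2 / (9 * d%:R) < 50 / 49 ->
  let aa := 1 / (2 * (lam ^+ 2 - 1)) in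
  let cstar := 1 / (8 * lam ^+ 2) *
      (Num.sqrt 2 * lam ^+ 2 * (1 - 2 * p) * Ct / Num.sqrt d%:R
       - Num.sqrt (lam ^+ 2 - 1) * (3 / 2 + lam ^+ 2)) in
  let eta := cstar * Num.sqrt (lam ^+ 2 - 1) in
  let Y := Yseq x G lam a (noise xi nu) in
  forall k : nat,
    cond_exp_le P (filt a (noise xi nu) k)
      (fun w => expR (eta * (Y k.+1 w - aa)) * (if Y k w <= aa then 1 else 0))
      (expR (Ct * (1 - 2 * p) / (3 * Num.sqrt d%:R))).
Proof.
move=> d_ge1 _ p_lt G_gt0 lam_gt0 Ct_gt0 ma mnu mxi _ _ a_unit _ _ _ _ _
  lam2_gt1 lam2_le lam2_lt aa cstar eta Y k A FA.
set sd := Num.sqrt d%:R; set B := Ct * (1 - 2 * p) / (3 * sd).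
have sd_gt0 : 0 < sd by rewrite sqrtr_gt0 ltr0n.
have sd2 : sd ^+ 2 = d%:R by rewrite sqr_sqrtr ?ler0n.
have B_gt0 : 0 < B by rewrite divr_gt0 ?mulr_gt0 //; lra.
have B2 : B ^+ 2 = Ct ^+ 2 * (1 - 2 * p) ^+ 2 / (9 * d%:R).
  by rewrite /B -sd2; field; rewrite gt_eqF.
have cstarE : cstar = 1 / (8 * lam ^+ 2) * (Num.sqrt 2 * lam ^+ 2 * (3 * B)
                        - Num.sqrt (lam ^+ 2 - 1) * (3 / 2 + lam ^+ 2)).
  by rewrite /cstar -/sd /B; congr (_ * (_ - _)); field; rewrite gt_eqF.
apply: integral_le_cst_measure.
  by apply: filt_sub_measurable FA => // j; exact: measurable_noise.
move=> w _; apply/andP; split; first by rewrite mulr_ge0 ?expR_ge0 //; case: ifP.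
case: ifP => [Yk_le|_]; last by rewrite mulr0 expR_ge0.
rewrite mulr1 ler_expR /eta cstarE.
by apply: Yseq_increment_le; rewrite ?B2 // -norm2_sqr a_unit expr1n.
Qed.
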